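(* Let $p \in (0,1)$, $m \geq 2$, and let $f : \{0,1\}^m \to \{0,1\}$. Let $\pi : [m] \to [m-1]$ be the map with $\pi(m-1) = \pi(m) = m-1$ and $\pi(i) = i$ for every $i \in [m-2]$. Then \[ \mathrm{Inf}^{(p)}[f^\pi, m-1] \geq \min(p,1-p) \cdot \mathrm{Inf}^{(p)}[f, m-1] - \frac{1}{\min(p,1-p)} \cdot \mathrm{Inf}^{(p)}[f, m]. \]
   Context: For $p \in (0,1)$, $\mu_{p,n}$ is the product $p$-biased distribution on $\{0,1\}^n$. For $g : \{0,1\}^n \to \{0,1\}$ and $i \in [n]$, $\mathrm{Inf}^{(p)}[g,i] = \mathbb{E}_{x \sim \mu_{p,n}}\big[(g(x) - \mathbb{E}_{s\sim\mu_{p,1}}[g(x^{i\to s})])^2\big] = p(1-p)\Pr_{x\sim\mu_{p,n}}[g(x)\neq g(x\oplus i)]$, where $x^{i\to s}$ is $x$ with coordinate $i$ set to $s$ and $x\oplus i$ is $x$ with coordinate $i$ flipped. For $\pi:[m]\to[k]$, the minor $f^\pi:\{0,1\}^k\to\{0,1\}$ is $f^\pi(y) = f(y_{\pi(1)},\dots,y_{\pi(m)})$. Influences of $f^\pi$ are taken with respect to $\mu_{p,m-1}$ and those of $f$ with respect to $\mu_{p,m}$. *)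

From HB Require Import structures.
From mathcomp Require Import all_boot all_order all_algebra.
Set Implicit Arguments. Unset Strict Implicit. Unset Printing Implicit Defensive.
Import Order.TTheory GRing.Theory Num.Theory.
Local Open Scope ring_scope.

(* The Boolean cube {0,1}^n, coordinates indexed by 'I_n (0-based). *)
Definition cube (n : nat) := {ffun 'I_n -> bool}.

Definition mu (R : ringType) (p : R) (n : nat) (x : cube n) : R :=
  \prod_(i < n) (if x i then p else 1 - p).

Definition setc (n : nat) (x : cube n) (i : 'I_n) (s : bool) : cube n :=
  [ffun j => if j == i then s else x j].

Definition Inf (R : ringType) (p : R) (n : nat) (g : cube n -> bool) (i : 'I_n) : R :=
  \sum_(x : cube n) mu p x *
    ((g x)%:R - (p * (g (setc x i true))%:R + (1 - p) * (g (setc x i false))%:R)) ^+ 2.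

Definition minor (m k : nat) (f : cube m -> bool) (pi : 'I_m -> 'I_k) : cube k -> bool :=
  fun y => f [ffun i => y (pi i)].

(* For m = n.+2: the map [m] -> [m-1] identifying the last two coordinates
   (0-based: i |-> min(i, n)). *)
Definition merge_last (n : nat) (i : 'I_n.+2) : 'I_n.+1 := inord (minn i n).

(* Splitting off the last two coordinates, each influence is an average over
   y in {0,1}^(m-2) of p(1-p) times disagreement indicators of the 2 x 2 table
   (a b; c d) of values f(y,1,1), f(y,1,0), f(y,0,1), f(y,0,0): the minor sees
   the diagonal [a != d], Inf[f,m-1] the columns and Inf[f,m] the rows. The
   theorem is then a pointwise inequality between these indicators. *)
From HB Require Import structures.
From mathcomp Require Import all_boot all_order all_algebra.
From mathcomp Require Import ring lra.
Import Order.TTheory GRing.Theory Num.Theory.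
Set Implicit Arguments. Unset Strict Implicit. Unset Printing Implicit Defensive.
Local Open Scope ring_scope.

Definition bias (R : nzRingType) (p : R) (b : bool) : R := if b then p else 1 - p.

Definition rcons_cube n (y : cube n) (b : bool) : cube n.+1 :=
  [ffun i => if unlift ord_max i is Some j then y j else b].

Lemma rcons_cube_max n (y : cube n) b : rcons_cube y b ord_max = b.
Proof. by rewrite ffunE unlift_none. Qed.

Lemma rcons_cube_lift n (y : cube n) b j : rcons_cube y b (lift ord_max j) = y j.
Proof. by rewrite ffunE liftK. Qed.

Lemma mu_rcons (R : nzRingType) (p : R) n (y : cube n) b :
  mu p (rcons_cube y b) = mu p y * bias p b.
Proof.
rewrite /mu big_ord_recr /= rcons_cube_max; congr (_ * _).
apply: eq_bigr => i _.
have -> : widen_ord (leqnSn n) i = lift ord_max i.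
  by apply: val_inj; rewrite /= /bump leqNgt ltn_ord.
by rewrite rcons_cube_lift.
Qed.

Lemma mu_ge0 (R : numDomainType) (p : R) n (x : cube n) :
  0 <= p <= 1 -> 0 <= mu p x.
Proof. by case/andP=> p0 p1; apply: prodr_ge0 => i _; case: ifP; rewrite ?subr_ge0. Qed.

Lemma sum_mu_rcons (R : comNzRingType) (p : R) n (F : cube n.+1 -> R) :
  \sum_x mu p x * F x =
  \sum_(y : cube n) mu p y * \sum_b bias p b * F (rcons_cube y b).
Proof.
under [RHS]eq_bigr => y _ do rewrite big_distrr.
rewrite pair_big (reindex (fun u : cube n * bool => rcons_cube u.1 u.2)) /=.
  by apply: eq_bigr => -[y b] _; rewrite mu_rcons mulrA.
exists (fun x : cube n.+1 => ([ffun j => x (lift ord_max j)], x ord_max)).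
  move=> [y b] _; rewrite rcons_cube_max; congr pair; apply/ffunP => j.
  by rewrite ffunE rcons_cube_lift.
move=> x _; apply/ffunP => i; rewrite ffunE.
by case: unliftP => [j ->|->] //; rewrite ffunE.
Qed.

Lemma setc_rcons_max n (y : cube n) b s :
  setc (rcons_cube y b) ord_max s = rcons_cube y s.
Proof.
apply/ffunP => i; rewrite !ffunE.
case: unliftP => [j ->|->]; last by rewrite eqxx.
by rewrite eq_sym (negbTE (neq_lift _ _)).
Qed.

Lemma setc_rcons_lift n (y : cube n) b j s :
  setc (rcons_cube y b) (lift ord_max j) s = rcons_cube (setc y j s) b.
Proof.
apply/ffunP => i; rewrite !ffunE.
case: unliftP => [k ->|->]; last by rewrite (negbTE (neq_lift _ _)).
by rewrite (inj_eq lift_inj) ffunE.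
Qed.

Lemma bernoulli_sq_dev (R : comNzRingType) (p : R) (a c : bool) :
  \sum_b bias p b * ((if b then a else c)%:R - (p * a%:R + (1 - p) * c%:R)) ^+ 2
  = p * (1 - p) * (a != c)%:R.
Proof. by rewrite big_bool /bias; case: a; case: c => /=; ring. Qed.

Lemma Inf_max (R : comNzRingType) (p : R) n (g : cube n.+1 -> bool) :
  Inf p g ord_max =
  p * (1 - p) * \sum_(y : cube n) mu p y *
    (g (rcons_cube y true) != g (rcons_cube y false))%:R.
Proof.
rewrite /Inf sum_mu_rcons mulr_sumr; apply: eq_bigr => y _.
rewrite mulrCA; congr (_ * _); rewrite -bernoulli_sq_dev.
by apply: eq_bigr => -[] _; rewrite !setc_rcons_max.
Qed.

Lemma Inf_lift (R : comNzRingType) (p : R) n (g : cube n.+1 -> bool) (j : 'I_n) :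
  Inf p g (lift ord_max j) =
  \sum_b bias p b * Inf p (fun y => g (rcons_cube y b)) j.
Proof.
rewrite /Inf sum_mu_rcons; under eq_bigr do rewrite big_distrr.
rewrite exchange_big /=; apply: eq_bigr => b _; rewrite mulr_sumr.
by apply: eq_bigr => y _; rewrite !setc_rcons_lift mulrCA.
Qed.

Lemma merge_last_lift n (j : 'I_n.+1) : merge_last (lift ord_max j) = j.
Proof.
apply: val_inj; rewrite /merge_last /= /bump leqNgt ltn_ord add0n.
by rewrite inordK; [apply/minn_idPl; rewrite -ltnS | rewrite ltnS geq_minr].
Qed.

Lemma merge_last_max n : merge_last (ord_max : 'I_n.+2) = ord_max.
Proof.
apply: val_inj; rewrite /merge_last /= inordK; first exact/minn_idPr.
by rewrite ltnS geq_minr.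
Qed.

Lemma minor_merge_last_rcons n (f : cube n.+2 -> bool) (y : cube n) b :
  minor f (@merge_last n) (rcons_cube y b) = f (rcons_cube (rcons_cube y b) b).
Proof.
congr f; apply/ffunP => i; rewrite ffunE.
case: (unliftP ord_max i) => [j ->|->].
  by rewrite merge_last_lift !rcons_cube_lift.
by rewrite merge_last_max !rcons_cube_max.
Qed.

(* If a = d, each column disagreement (a != c, b != d) forces a row
   disagreement, paid for by t (1 - p) <= 1 <= p / t and t p <= 1 <= (1 - p) / t;
   if a != d, the first term is at most t <= 1. *)
Lemma square_diag_neq_ge (R : realFieldType) (p t : R) (a b c d : bool) :
  0 < t -> t <= p -> t <= 1 - p ->
  t * (p * (a != c)%:R + (1 - p) * (b != d)%:R)
    - t^-1 * (p * (a != b)%:R + (1 - p) * (c != d)%:R) <= (a != d)%:R.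
Proof.
move=> t0 tp tq.
have tt : t * t^-1 = 1 by rewrite mulfV // gt_eqF.
have ti0 : 0 < t^-1 by rewrite invr_gt0.
have tip : 1 <= t^-1 * p by nra.
have tiq : 1 <= t^-1 * (1 - p) by nra.
by case: a; case: b; case: c; case: d => /=; nra.
Qed.

Theorem mainTheorem3 (R : realFieldType) (p : R) (n : nat)
    (f : cube n.+2 -> bool) :
  0 < p -> p < 1 ->
  Inf p (minor f (@merge_last n)) (ord_max : 'I_n.+1) >=
    Num.min p (1 - p) * Inf p f (inord n : 'I_n.+2)
    - (Num.min p (1 - p))^-1 * Inf p f (ord_max : 'I_n.+2).
Proof.
move=> p0 p1; set t := Num.min p (1 - p).
have t0 : 0 < t by rewrite lt_min p0 subr_gt0.
have tp : t <= p by rewrite ge_min lexx.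
have tq : t <= 1 - p by rewrite ge_min lexx orbT.
have -> : (inord n : 'I_n.+2) = lift ord_max ord_max.
  by apply: val_inj; rewrite /= inordK // /bump ltnn.
rewrite Inf_lift big_bool /= !Inf_max sum_mu_rcons.
rewrite !mulr_sumr -big_split /= !mulr_sumr -sumrB; apply: ler_sum => y _.
rewrite !minor_merge_last_rcons big_bool /=.
have w0 : 0 <= p * (1 - p) * mu p y by rewrite !mulr_ge0 ?mu_ge0 ?subr_ge0 ?ltW.
have := square_diag_neq_ge (f (rcons_cube (rcons_cube y true) true))
  (f (rcons_cube (rcons_cube y true) false)) (f (rcons_cube (rcons_cube y false) true))
  (f (rcons_cube (rcons_cube y false) false)) t0 tp tq.
by move=> /(ler_wpM2l w0); lra.
Qed.
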